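(* Let $(A,\circ,[\cdot,\cdot])$ be a finite-dimensional dual pre-Poisson algebra and let $r\in A\otimes A$ be symmetric. Then $r$ is a solution of the permutative-Leibniz Yang–Baxter equation if and only if $\tilde r:A^*\to A$ satisfies, for all $a^*,b^*\in A^*$, $$\tilde r(a^* )\circ\tilde r(b^* )=\tilde r\big(-L_\circ^*(\tilde r(a^* ))b^*-L_\blacksquare^*(\tilde r(b^* ))a^*\big),$$ $$[\tilde r(a^* ),\tilde r(b^* )]=\tilde r\big(L_{[\cdot,\cdot]}^*(\tilde r(a^* ))b^*-L_\square^*(\tilde r(b^* ))a^*\big),$$ i.e. $\tilde r$ is an $\mathcal{O}$-operator on $(A,\circ,[\cdot,\cdot])$ associated to the representation $(A^*;-L_\circ^*,-L_\blacksquare^*,L_{[\cdot,\cdot]}^*,-L_\square^* )$.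
   Context: Field $\mathbb{F}$ of characteristic $0$. Dual pre-Poisson algebra: $x\circ(y\circ z)=(x\circ y)\circ z=(y\circ x)\circ z$; $[x,[y,z]]=[[x,y],z]+[y,[x,z]]$; $[x,y\circ z]=[x,y]\circ z+y\circ[x,z]$; $[x\circ y,z]=x\circ[y,z]+y\circ[x,z]$; $[x,y]\circ z=-[y,x]\circ z$. $x\blacksquare y=x\circ y-y\circ x$, $x\square y=[x,y]+[y,x]$; $L_\diamond(x)y=x\diamond y$; for $f:A\to\mathrm{End}(A)$, $\langle f^*(x)a^*,y\rangle=-\langle a^*,f(x)y\rangle$. For $r\in A\otimes A$, $\tilde r:A^*\to A$ is defined by $\langle\tilde r(u^* ),v^*\rangle=\langle r,u^*\otimes v^*\rangle$. Symmetric means invariant under the flip. PLYBE: for $r=\sum_i a_i\otimes b_i$, $\mathbf{P}(r)=\sum_{i,j}\big(a_i\otimes a_j\otimes b_i\circ b_j-a_i\otimes b_i\circ a_j\otimes b_j+a_i\blacksquare a_j\otimes b_j\otimes b_i\big)$, $\mathbf{L}(r)=\sum_{i,j}\big(a_i\otimes a_j\otimes[b_i,b_j]+a_i\otimes[b_i,a_j]\otimes b_j-a_i\square a_j\otimes b_i\otimes b_j\big)$; $r$ is a solution if $\mathbf{P}(r)=\mathbf{L}(r)=0$. *)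

(* A finite-dimensional vector space A over F is modelled as
   'rV[F]_n (coordinates in the standard basis e_0..e_{n-1}); the dual space is
   also 'rV[F]_n with the pairing <a, y> = \sum_i a*_i y_i; A (x) A is 'M[F]_n
   (r = \sum_{i,j} r i j e_i (x) e_j); A (x) A (x) A is represented by
   coefficient functions 'I_n -> 'I_n -> 'I_n -> F. *)
From HB Require Import structures.
From mathcomp Require Import all_boot all_order all_algebra.
Set Implicit Arguments. Unset Strict Implicit. Unset Printing Implicit Defensive.
Import GRing.Theory.
Local Open Scope ring_scope.

Section Defs.
Variables (F : fieldType) (n : nat).
Notation A := 'rV[F]_n.

Definition bilinear_op (m : A -> A -> A) : Prop :=
  (forall (c : F) x y z, m (c *: x + y) z = c *: m x z + m y z) /\
  (forall (c : F) x y z, m x (c *: y + z) = c *: m x y + m x z).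

Definition dual_prepoisson (circ br : A -> A -> A) : Prop :=
  bilinear_op circ /\ bilinear_op br /\
  (forall x y z, circ x (circ y z) = circ (circ x y) z
                 /\ circ (circ x y) z = circ (circ y x) z) /\
  (forall x y z, br x (br y z) = br (br x y) z + br y (br x z)) /\
  (forall x y z, br x (circ y z) = circ (br x y) z + circ y (br x z)) /\
  (forall x y z, br (circ x y) z = circ x (br y z) + circ y (br x z)) /\
  (forall x y z, circ (br x y) z = - circ (br y x) z).

Definition bsq (circ : A -> A -> A) : A -> A -> A :=
  fun x y => circ x y - circ y x.
Definition sq (br : A -> A -> A) : A -> A -> A :=
  fun x y => br x y + br y x.

Definition ebase (j : 'I_n) : A := delta_mx 0 j.

Definition pair (a y : A) : F := \sum_i a 0 i * y 0 i.

(* f^* : <f^dual(x) a, y> = - <a, f(x) y>, with f = L_m, i.e. f(x) y = m x y *)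
Definition dualL (m : A -> A -> A) (x : A) (a : A) : A :=
  \row_j (- pair a (m x (ebase j))).

(* r~ : A^* -> A, <r~(u), v> = <r, u (x) v> *)
Definition rtilde (r : 'M[F]_n) (u : A) : A := \row_j \sum_i u 0 i * r i j.

Definition symmetric_tensor (r : 'M[F]_n) : Prop := r^T = r.

Definition tens3 (x y z : A) : 'I_n -> 'I_n -> 'I_n -> F :=
  fun p q s => x 0 p * y 0 q * z 0 s.

(* P(r) and L(r) for a decomposition r = \sum_i a_i (x) b_i *)
Definition Pfam (circ : A -> A -> A) (I : finType) (a b : I -> A) :=
  fun p q s => \sum_i \sum_j
    (tens3 (a i) (a j) (circ (b i) (b j)) p q s
     - tens3 (a i) (circ (b i) (a j)) (b j) p q s
     + tens3 (bsq circ (a i) (a j)) (b j) (b i) p q s).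

Definition Lfam (br : A -> A -> A) (I : finType) (a b : I -> A) :=
  fun p q s => \sum_i \sum_j
    (tens3 (a i) (a j) (br (b i) (b j)) p q s
     + tens3 (a i) (br (b i) (a j)) (b j) p q s
     - tens3 (sq br (a i) (a j)) (b i) (b j) p q s).

(* canonical decomposition r = \sum_{(i,j)} (r i j e_i) (x) e_j *)
Definition dec_a (r : 'M[F]_n) (ij : 'I_n * 'I_n) : A := r ij.1 ij.2 *: ebase ij.1.
Definition dec_b (r : 'M[F]_n) (ij : 'I_n * 'I_n) : A := ebase ij.2.

Definition PLYBE (circ br : A -> A -> A) (r : 'M[F]_n) : Prop :=
  (forall p q s, Pfam circ (dec_a r) (dec_b r) p q s = 0) /\
  (forall p q s, Lfam br (dec_a r) (dec_b r) p q s = 0).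

End Defs.

(* Pair each O-operator identity, written as [defect x y = 0], with a third
   covector [w].  Symmetry of [r] gives two expansions
   [r~ u = \sum_i <u, a_i> b_i = \sum_i <u, b_i> a_i], which make [r~]
   self-adjoint and, together with [<u, L_m^*(x) b> = - <b, m x u>], turn
   [<w, defect x y>] into the contraction of P(r) (resp. L(r)) with
   [x (x) y (x) w].  The pairing is nondegenerate and a 3-tensor vanishes iff
   all its contractions do, so the identities hold iff P(r) = L(r) = 0. *)

From HB Require Import structures.
From mathcomp Require Import all_boot all_order all_algebra.
From mathcomp Require Import ring.
Import GRing.Theory.
Set Implicit Arguments.
Unset Strict Implicit.
Unset Printing Implicit Defensive.
Local Open Scope ring_scope.

Section Pairing.
Variables (F : fieldType) (n : nat).
Local Notation A := 'rV[F]_n.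

Fact pair_is_linear (a : A) : linear_for *%R (pair a).
Proof.
move=> k u v; rewrite /pair mulr_sumr -big_split.
by apply: eq_bigr => i _; rewrite !mxE mulrDr mulrCA.
Qed.
HB.instance Definition _ (a : A) :=
  GRing.isLinear.Build F A F *%R (pair a) (pair_is_linear a).

Lemma pairC (a u : A) : pair a u = pair u a.
Proof. by apply: eq_bigr => i _; rewrite mulrC. Qed.

Lemma sum_ebase (p : 'I_n) (f : 'I_n -> F) : \sum_i ebase F p 0 i * f i = f p.
Proof.
rewrite (bigD1 p) //= big1 => [|i ne]; first by rewrite mxE !eqxx mul1r addr0.
by rewrite mxE (negbTE ne) andbF mul0r.
Qed.

Lemma pair_ebase (p : 'I_n) (u : A) : pair (ebase F p) u = u 0 p.
Proof. exact: sum_ebase. Qed.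

Lemma sum_scale_ebase (c : 'I_n -> F) : \sum_l c l *: ebase F l = \row_l c l.
Proof. by rewrite [RHS]row_sum_delta; apply: eq_bigr => l _; rewrite mxE. Qed.

Lemma pair_eq0P (u : A) : (forall w, pair w u = 0) <-> u = 0.
Proof.
split=> [u0 | -> w]; last exact: raddf0.
by apply/rowP => j; rewrite -pair_ebase u0 mxE.
Qed.

End Pairing.

Section Bilinear.
Variables (F : fieldType) (n : nat).
Local Notation A := 'rV[F]_n.
Variable m : A -> A -> A.
Hypothesis m_bil : bilinear_op m.

Lemma bilinear_opDl x y z : m (x + y) z = m x z + m y z.
Proof. by have := m_bil.1 1 x y z; rewrite !scale1r. Qed.

Lemma bilinear_opDr x y z : m x (y + z) = m x y + m x z.
Proof. by have := m_bil.2 1 x y z; rewrite !scale1r. Qed.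

Lemma bilinear_op0l z : m 0 z = 0.
Proof. by apply: (addrI (m 0 z)); rewrite -bilinear_opDl !addr0. Qed.

Lemma bilinear_op0r z : m z 0 = 0.
Proof. by apply: (addrI (m z 0)); rewrite -bilinear_opDr !addr0. Qed.

Lemma bilinear_opZl k x z : m (k *: x) z = k *: m x z.
Proof. by have := m_bil.1 k x 0 z; rewrite !addr0 bilinear_op0l addr0. Qed.

Lemma bilinear_opZr k x z : m x (k *: z) = k *: m x z.
Proof. by have := m_bil.2 k x z 0; rewrite !addr0 bilinear_op0r addr0. Qed.

Lemma bilinear_sum (I J : finType)
    (k : I -> F) (u : I -> A) (l : J -> F) (v : J -> A) :
  m (\sum_i k i *: u i) (\sum_j l j *: v j)
  = \sum_i \sum_j (k i * l j) *: m (u i) (v j).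
Proof.
rewrite (big_morph (m^~ _) (fun x y => bilinear_opDl x y _) (bilinear_op0l _)).
apply: eq_bigr => i _; rewrite bilinear_opZl.
rewrite (big_morph (m _) (bilinear_opDr _) (bilinear_op0r _)) scaler_sumr.
by apply: eq_bigr => j _; rewrite bilinear_opZr scalerA.
Qed.

Lemma pair_bilinear_sum (I J : finType) w
    (k : I -> F) (u : I -> A) (l : J -> F) (v : J -> A) :
  pair w (m (\sum_i k i *: u i) (\sum_j l j *: v j))
  = \sum_i \sum_j k i * l j * pair w (m (u i) (v j)).
Proof.
rewrite bilinear_sum linear_sum; apply: eq_bigr => i _.
by rewrite linear_sum; apply: eq_bigr => j _; rewrite linearZ.
Qed.

Lemma pair_dualL (u x b : A) : pair u (dualL m x b) = - pair b (m x u).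
Proof.
rewrite {2}(row_sum_delta u) (big_morph (m _) (bilinear_opDr _) (bilinear_op0r _)).
rewrite linear_sum -sumrN; apply: eq_bigr => j _.
by rewrite mxE bilinear_opZr linearZ mulrN.
Qed.

Lemma bilinear_bsq : bilinear_op (bsq m).
Proof. by split=> c x y z; rewrite /bsq ?m_bil.1 ?m_bil.2 scalerBr opprD addrACA. Qed.

Lemma bilinear_sq : bilinear_op (sq m).
Proof. by split=> c x y z; rewrite /sq ?m_bil.1 ?m_bil.2 scalerDr addrACA. Qed.

End Bilinear.

Section Contraction.
Variables (F : fieldType) (n : nat).
Local Notation A := 'rV[F]_n.
Local Notation tensor3 := ('I_n -> 'I_n -> 'I_n -> F).

Definition contract3 (t : tensor3) (u v w : A) : F :=
  \sum_p u 0 p * \sum_q v 0 q * \sum_s w 0 s * t p q s.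

Lemma contract3_ebase (t : tensor3) p q s :
  contract3 t (ebase F p) (ebase F q) (ebase F s) = t p q s.
Proof. by rewrite /contract3 !sum_ebase. Qed.

Lemma contract3_tens3 (x y z u v w : A) :
  contract3 (tens3 x y z) u v w = pair u x * pair v y * pair w z.
Proof.
rewrite /contract3 /pair /tens3 !mulr_suml; apply: eq_bigr => p _.
rewrite -!mulrA; congr (_ * _); rewrite mulrCA mulr_suml; apply: eq_bigr => q _.
rewrite -!mulrA; congr (_ * _); rewrite !mulr_sumr; apply: eq_bigr => s _; ring.
Qed.

Lemma contract3_sum (I : finType) (f : I -> tensor3) u v w :
  contract3 (fun p q s => \sum_k f k p q s) u v w = \sum_k contract3 (f k) u v w.
Proof.
rewrite /contract3 [RHS]exchange_big; apply: eq_bigr => p _; rewrite -mulr_sumr.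
congr (_ * _); rewrite [RHS]exchange_big; apply: eq_bigr => q _; rewrite -mulr_sumr.
by congr (_ * _); rewrite [RHS]exchange_big; apply: eq_bigr => s _; rewrite -mulr_sumr.
Qed.

Lemma contract3D (t1 t2 : tensor3) u v w :
  contract3 (fun p q s => t1 p q s + t2 p q s) u v w
  = contract3 t1 u v w + contract3 t2 u v w.
Proof.
rewrite /contract3 -big_split; apply: eq_bigr => p _ /=; rewrite -mulrDr -big_split.
congr (_ * _); apply: eq_bigr => q _ /=; rewrite -mulrDr -big_split.
by congr (_ * _); apply: eq_bigr => s _ /=; rewrite -mulrDr.
Qed.

Lemma contract3B (t1 t2 : tensor3) u v w :
  contract3 (fun p q s => t1 p q s - t2 p q s) u v w
  = contract3 t1 u v w - contract3 t2 u v w.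
Proof.
rewrite /contract3 -sumrB; apply: eq_bigr => p _; rewrite -mulrBr -sumrB.
congr (_ * _); apply: eq_bigr => q _; rewrite -mulrBr -sumrB.
by congr (_ * _); apply: eq_bigr => s _; rewrite -mulrBr.
Qed.

Lemma contract3_sum2 (I : finType) (f : I -> I -> tensor3) u v w :
  contract3 (fun p q s => \sum_i \sum_j f i j p q s) u v w
  = \sum_i \sum_j contract3 (f i j) u v w.
Proof.
apply: etrans (contract3_sum _ _ _ _) _.
by apply: eq_bigr => i _; apply: contract3_sum.
Qed.

Lemma contract3_Pfam (m : A -> A -> A) (I : finType) (a b : I -> A) u v w :
  contract3 (Pfam m a b) u v w = \sum_i \sum_j
    (pair u (a i) * pair v (a j) * pair w (m (b i) (b j))
     - pair u (a i) * pair v (m (b i) (a j)) * pair w (b j)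
     + pair u (bsq m (a i) (a j)) * pair v (b j) * pair w (b i)).
Proof.
apply: etrans (contract3_sum2 _ _ _ _) _.
apply: eq_bigr => i _; apply: eq_bigr => j _.
by rewrite contract3D contract3B !contract3_tens3.
Qed.

Lemma contract3_Lfam (m : A -> A -> A) (I : finType) (a b : I -> A) u v w :
  contract3 (Lfam m a b) u v w = \sum_i \sum_j
    (pair u (a i) * pair v (a j) * pair w (m (b i) (b j))
     + pair u (a i) * pair v (m (b i) (a j)) * pair w (b j)
     - pair u (sq m (a i) (a j)) * pair v (b i) * pair w (b j)).
Proof.
apply: etrans (contract3_sum2 _ _ _ _) _.
apply: eq_bigr => i _; apply: eq_bigr => j _.
by rewrite contract3B contract3D !contract3_tens3.
Qed.

Lemma contract3_eq0P (t : tensor3) :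
  (forall p q s, t p q s = 0) <-> (forall u v w, contract3 t u v w = 0).
Proof.
split=> [t0 u v w | t0 p q s]; last by rewrite -contract3_ebase t0.
rewrite /contract3 big1 // => p _; rewrite big1 ?mulr0 // => q _.
by rewrite big1 ?mulr0 // => s _; rewrite t0 mulr0.
Qed.

Lemma tensor_eq0_defectP (t : tensor3) (D : A -> A -> A) :
  (forall x y w, pair w (D x y) = contract3 t x y w) ->
  (forall p q s, t p q s = 0) <-> (forall x y, D x y = 0).
Proof.
move=> Dt; rewrite contract3_eq0P; split=> [t0 x y | D0 x y w].
  by apply/pair_eq0P => w; rewrite Dt.
by rewrite -Dt D0 linear0.
Qed.

End Contraction.

Section ODefects.
Variables (F : fieldType) (n : nat).
Local Notation A := 'rV[F]_n.

Definition Odefect_circ (m : A -> A -> A) (T : A -> A) (x y : A) : A :=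
  m (T x) (T y) - T (- dualL m (T x) y - dualL (bsq m) (T y) x).

Definition Odefect_br (m : A -> A -> A) (T : A -> A) (x y : A) : A :=
  m (T x) (T y) - T (dualL m (T x) y - dualL (sq m) (T y) x).

Variables (T : A -> A) (I : finType) (a b : I -> A).
Hypothesis T_ab : forall u, T u = \sum_i pair u (a i) *: b i.
Hypothesis T_ba : forall u, T u = \sum_i pair u (b i) *: a i.

Lemma pair_T_adjoint u w : pair w (T u) = pair (T w) u.
Proof.
rewrite (T_ab u) (T_ba w) [RHS]pairC !linear_sum; apply: eq_bigr => i _.
by rewrite !linearZ /= pairC mulrC.
Qed.

Variable m : A -> A -> A.
Hypothesis m_bil : bilinear_op m.

Lemma pair_Odefect_circ x y w :
  pair w (Odefect_circ m T x y) = contract3 (Pfam m a b) x y w.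
Proof.
have -> : pair w (Odefect_circ m T x y) = pair w (m (T x) (T y))
    - pair y (m (T x) (T w)) + pair x (bsq m (T w) (T y)).
  rewrite linearB /= pair_T_adjoint linearB linearN /=.
  rewrite (pair_dualL m_bil) (pair_dualL (bilinear_bsq m_bil)) /bsq !linearB /=.
  ring.
rewrite {2}(T_ba y) (T_ab y) (T_ab x) (T_ba w) contract3_Pfam.
rewrite !(pair_bilinear_sum m_bil) (pair_bilinear_sum (bilinear_bsq m_bil)).
rewrite -sumrB -big_split; apply: eq_bigr => i _ /=.
rewrite -sumrB -big_split; apply: eq_bigr => j _ /=.
ring.
Qed.

Lemma pair_Odefect_br x y w :
  pair w (Odefect_br m T x y) = contract3 (Lfam m a b) x y w.
Proof.
have -> : pair w (Odefect_br m T x y) = pair w (m (T x) (T y))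
    + pair y (m (T x) (T w)) - pair x (sq m (T y) (T w)).
  rewrite linearB /= pair_T_adjoint linearB /=.
  rewrite (pair_dualL m_bil) (pair_dualL (bilinear_sq m_bil)).
  ring.
rewrite {2}(T_ba y) (T_ab y) (T_ab x) (T_ba w) contract3_Lfam.
rewrite !(pair_bilinear_sum m_bil) (pair_bilinear_sum (bilinear_sq m_bil)).
rewrite -big_split -sumrB; apply: eq_bigr => i _ /=.
rewrite -big_split -sumrB; apply: eq_bigr => j _ /=.
ring.
Qed.

End ODefects.

Section Rtilde.
Variables (F : fieldType) (n : nat) (r : 'M[F]_n).

Lemma rtilde_dec_ab u : rtilde r u = \sum_i pair u (dec_a r i) *: dec_b r i.
Proof.
rewrite /dec_a /dec_b.
rewrite -(pair_bigA _ (fun i l => pair u (r i l *: ebase F i) *: ebase F l)).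
rewrite exchange_big /=; under eq_bigr do rewrite -scaler_suml.
rewrite sum_scale_ebase; apply/rowP => j; rewrite !mxE; apply: eq_bigr => i _.
by rewrite linearZ /= pairC pair_ebase mulrC.
Qed.

Lemma rtilde_dec_ba (r_sym : symmetric_tensor r) u :
  rtilde r u = \sum_i pair u (dec_b r i) *: dec_a r i.
Proof.
rewrite /dec_a /dec_b.
rewrite -(pair_bigA _ (fun i l => pair u (ebase F l) *: (r i l *: ebase F i))) /=.
under eq_bigr do under eq_bigr do rewrite scalerA.
under eq_bigr do rewrite -scaler_suml.
rewrite sum_scale_ebase; apply/rowP => j; rewrite !mxE; apply: eq_bigr => l _.
by rewrite pairC pair_ebase -[in LHS]r_sym mxE.
Qed.

End Rtilde.

Theorem proposition3p19 (F : fieldType) (n : nat)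
    (circ br : 'rV[F]_n -> 'rV[F]_n -> 'rV[F]_n) (r : 'M[F]_n) :
  [pchar F] =i pred0 ->
  dual_prepoisson circ br ->
  symmetric_tensor r ->
  PLYBE circ br r <->
  (forall a b : 'rV[F]_n,
      circ (rtilde r a) (rtilde r b)
        = rtilde r (- dualL circ (rtilde r a) b - dualL (bsq circ) (rtilde r b) a)
   /\ br (rtilde r a) (rtilde r b)
        = rtilde r (dualL br (rtilde r a) b - dualL (sq br) (rtilde r b) a)).
Proof.
move=> _ [circ_bil [br_bil _]] r_sym.
have T_ab := rtilde_dec_ab r; have T_ba := rtilde_dec_ba r_sym.
have P_iff := tensor_eq0_defectP (pair_Odefect_circ T_ab T_ba circ_bil).
have L_iff := tensor_eq0_defectP (pair_Odefect_br T_ab T_ba br_bil).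
rewrite /PLYBE P_iff L_iff /Odefect_circ /Odefect_br.
split=> [[P0 L0] x y | O0]; first by split; apply/subr0_eq; [exact: P0 | exact: L0].
by split=> x y; apply/eqP; rewrite subr_eq0; apply/eqP; case: (O0 x y).
Qed.
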